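(* For any two algebras $A,B$ there is a natural isomorphism of pro-algebras $\mathfrak{op}(\mathfrak{M}^{\mathrm{nc}}(A,B))\cong\mathfrak{M}^{\mathrm{nc}}(\mathfrak{op}(A),\mathfrak{op}(B))$.
   Context: Fix a field $\mathbb{F}$; algebras are associative, not necessarily unital or commutative $\mathbb{F}$-algebras, forming the category $\mathbf{A}_{\mathrm{nc}}$; $\otimes=\otimes_{\mathbb{F}}$. Pro-algebras are inverse systems of algebras over directed sets with $\mathrm{Hom}((C_i),(D_j))=\varprojlim_j\varinjlim_i\mathrm{Hom}(C_i,D_j)$; functors and tensor products are applied componentwise. For algebras $A,B$, $\mathfrak{M}^{\mathrm{nc}}(A,B)$ with $\Upsilon_{A,B}:A\to B\otimes\mathfrak{M}^{\mathrm{nc}}(A,B)$ is the (existing, unique up to isomorphism) universal pair: for every pro-algebra $C$ and pro-morphism $\varphi:A\to B\otimes C$ there is a unique $\overline{\varphi}:\mathfrak{M}^{\mathrm{nc}}(A,B)\to C$ with $\varphi=(\mathrm{id}_B\otimes\overline{\varphi})\Upsilon_{A,B}$. $\mathfrak{op}:\mathbf{A}_{\mathrm{nc}}\to\mathbf{A}_{\mathrm{nc}}$ sends an algebra to the algebra with the opposite multiplication. *)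

From HB Require Import structures.
From mathcomp Require Import all_boot all_order all_algebra.
Unset Printing Implicit Defensive.
Import GRing.Theory.
Local Open Scope ring_scope.

Section NC.
Variable F : fieldType.

Record ncalg := NcAlg {
  nc_carrier :> lmodType F;
  nc_mul : nc_carrier -> nc_carrier -> nc_carrier;
  nc_mulA : forall x y z, nc_mul x (nc_mul y z) = nc_mul (nc_mul x y) z;
  nc_mulDl : forall x y z, nc_mul (x + y) z = nc_mul x z + nc_mul y z;
  nc_mulDr : forall x y z, nc_mul x (y + z) = nc_mul x y + nc_mul x z;
  nc_mulZl : forall (k : F) x y, nc_mul (k *: x) y = k *: nc_mul x y;
  nc_mulZr : forall (k : F) x y, nc_mul x (k *: y) = k *: nc_mul x y }.
Arguments nc_mul {_}.

Definition is_alg_hom {A B : ncalg} (f : A -> B) :=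
  (forall (k : F) x y, f (k *: x + y) = k *: f x + f y) /\
  (forall x y, f (nc_mul x y) = nc_mul (f x) (f y)).

Record alg_hom (A B : ncalg) := AlgHom {
  ah_fun :> A -> B;
  ah_prop : is_alg_hom ah_fun }.
Arguments ah_fun {A B}.
Arguments ah_prop {A B}.
Arguments AlgHom {A B}.

Lemma id_is_alg_hom (A : ncalg) : is_alg_hom (fun x : A => x).
Proof. by split. Qed.
Definition id_hom (A : ncalg) : alg_hom A A := AlgHom _ (id_is_alg_hom A).

Definition op_alg (A : ncalg) : ncalg.
Proof.
refine (@NcAlg (nc_carrier A) (fun x y => nc_mul y x) _ _ _ _ _).
- by move=> x y z; rewrite nc_mulA.
- by move=> x y z; rewrite nc_mulDr.
- by move=> x y z; rewrite nc_mulDl.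
- by move=> k x y; rewrite nc_mulZr.
- by move=> k x y; rewrite nc_mulZl.
Defined.

Lemma op_is_alg_hom (A B : ncalg) (f : alg_hom A B) :
  @is_alg_hom (op_alg A) (op_alg B) (ah_fun f).
Proof. case: f => f [Hl Hm]; split => //= x y; exact: Hm. Qed.
Definition op_hom {A B : ncalg} (f : alg_hom A B) : alg_hom (op_alg A) (op_alg B) :=
  AlgHom _ (op_is_alg_hom A B f).

Record proalg := ProAlg {
  pa_idx : Type;
  pa_le : pa_idx -> pa_idx -> Prop;
  pa_refl : forall i, pa_le i i;
  pa_trans : forall i j k, pa_le i j -> pa_le j k -> pa_le i k;
  pa_inhabited : inhabited pa_idx;
  pa_directed : forall i j, exists k, pa_le i k /\ pa_le j k;
  pa_obj : pa_idx -> ncalg;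
  pa_map : forall i j, pa_le i j -> alg_hom (pa_obj j) (pa_obj i);
  pa_map_id : forall i (h : pa_le i i) x, pa_map i i h x = x;
  pa_map_comp : forall i j k (hij : pa_le i j) (hjk : pa_le j k) (hik : pa_le i k) x,
      pa_map i j hij (pa_map j k hjk x) = pa_map i k hik x }.
Arguments pa_obj : clear implicits.
Arguments pa_le : clear implicits.
Arguments pa_map {_ _ _}.

(* equality of germs in colim_i Hom(C_i, X) (X a type with an equality R) *)
Definition germ_eq {C : proalg} {X : Type} (R : X -> X -> Prop)
    {i : pa_idx C} (f : pa_obj C i -> X) {i' : pa_idx C} (f' : pa_obj C i' -> X) :=
  exists k (hi : pa_le C i k) (hi' : pa_le C i' k),
    forall x, R (f (pa_map hi x)) (f' (pa_map hi' x)).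

(* morphisms of pro-algebras: elements of lim_j colim_i Hom(C_i, D_j),
   given by representatives *)
Record prohom (C D : proalg) := ProHom {
  ph_idx : pa_idx D -> pa_idx C;
  ph_map : forall j, alg_hom (pa_obj C (ph_idx j)) (pa_obj D j);
  ph_compat : forall j j' (h : pa_le D j j'),
      germ_eq (@eq _) (fun x => pa_map h (ph_map j' x)) (fun x => ph_map j x) }.
Arguments ph_idx {C D}.
Arguments ph_map {C D}.

Record rawhom (C D : proalg) := RawHom {
  rh_idx : pa_idx D -> pa_idx C;
  rh_map : forall j, pa_obj C (rh_idx j) -> pa_obj D j }.
Arguments rh_idx {C D}.
Arguments rh_map {C D}.

Definition raw_of {C D : proalg} (f : prohom C D) : rawhom C D :=
  @RawHom C D (ph_idx f) (fun j => ah_fun (ph_map f j)).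

(* equality in lim_j colim_i Hom(C_i, D_j) *)
Definition raw_eq {C D : proalg} (f g : rawhom C D) :=
  forall j, germ_eq (@eq _) (rh_map f j) (rh_map g j).

Definition raw_id (C : proalg) : rawhom C C :=
  @RawHom C C (fun j => j) (fun j x => x).

Definition raw_comp {C D E : proalg} (g : prohom D E) (f : prohom C D) : rawhom C E :=
  @RawHom C E (fun k => ph_idx f (ph_idx g k))
    (fun k x => ph_map g k (ph_map f (ph_idx g k) x)).

Definition ph_eq {C D : proalg} (f g : prohom C D) := raw_eq (raw_of f) (raw_of g).

Definition is_proiso {C D : proalg} (f : prohom C D) :=
  exists g : prohom D C,
    raw_eq (raw_comp g f) (raw_id C) /\ raw_eq (raw_comp f g) (raw_id D).

Definition op_pro (C : proalg) : proalg :=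
  @ProAlg (pa_idx C) (pa_le C) (@pa_refl C) (@pa_trans C) (pa_inhabited C)
    (@pa_directed C) (fun i => op_alg (pa_obj C i))
    (fun i j h => op_hom (pa_map h)) (@pa_map_id C) (@pa_map_comp C).

Definition op_prohom {C D : proalg} (f : prohom C D) : prohom (op_pro C) (op_pro D) :=
  @ProHom (op_pro C) (op_pro D) (ph_idx f) (fun j => op_hom (ph_map f j))
    (@ph_compat C D f).

(* ---------- tensor products B (x) X: an element is a finite sum of pure
   tensors, represented by a list of pairs; two lists represent the same
   tensor iff every bilinear map takes the same value on them. *)
Definition is_bilinear {B X W : lmodType F} (beta : B -> X -> W) :=
  (forall (k : F) b b' x, beta (k *: b + b') x = k *: beta b x + beta b' x) /\
  (forall (k : F) b x x', beta b (k *: x + x') = k *: beta b x + beta b x').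

Definition tensor_eq {B X : lmodType F} (s t : seq (B * X)) :=
  forall (W : lmodType F) (beta : B -> X -> W), is_bilinear beta ->
    \sum_(p <- s) beta p.1 p.2 = \sum_(p <- t) beta p.1 p.2.

Definition tscale {B X : lmodType F} (k : F) (s : seq (B * X)) :=
  [seq (k *: p.1, p.2) | p <- s].

Definition tmul {B X : ncalg} (s t : seq (B * X)) : seq (B * X) :=
  [seq (nc_mul p.1 q.1, nc_mul p.2 q.2) | p <- s, q <- t].

Definition tmap_r {B X Y : Type} (g : X -> Y) (s : seq (B * X)) : seq (B * Y) :=
  [seq (p.1, g p.2) | p <- s].
Definition tmap_l {B B' X : Type} (g : B -> B') (s : seq (B * X)) : seq (B' * X) :=
  [seq (g p.1, p.2) | p <- s].

Definition is_tens_hom {A B X : ncalg} (phi : A -> seq (B * X)) :=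
  (forall (k : F) a a', tensor_eq (phi (k *: a + a')) (tscale k (phi a) ++ phi a')) /\
  (forall a a', tensor_eq (phi (nc_mul a a')) (tmul (phi a) (phi a'))).

(* pro-morphisms A -> B (x) C, for an algebra A (a constant pro-algebra) and
   B (x) C = (B (x) C_j)_j *)
Record tprohom (A B : ncalg) (C : proalg) := TProHom {
  tp_map : forall j, A -> seq (B * pa_obj C j);
  tp_hom : forall j, is_tens_hom (tp_map j);
  tp_compat : forall j j' (h : pa_le C j j') a,
      tensor_eq (tmap_r (pa_map h) (tp_map j' a)) (tp_map j a) }.
Arguments tp_map {A B C}.

Definition factors {A B : ncalg} {M C : proalg} (U : tprohom A B M)
    (psi : prohom M C) (phi : tprohom A B C) :=
  forall j a, tensor_eq (tmap_r (ph_map psi j) (tp_map U (ph_idx psi j) a))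
                        (tp_map phi j a).

Definition is_universal_measuring {A B : ncalg} {M : proalg} (U : tprohom A B M) :=
  forall (C : proalg) (phi : tprohom A B C),
    (exists psi : prohom M C, factors U psi phi) /\
    (forall psi psi' : prohom M C, factors U psi phi -> factors U psi' phi ->
       ph_eq psi psi').

Definition induced_map {A A' B B' : ncalg} {M M' : proalg}
    (U : tprohom A B M) (U' : tprohom A' B' M')
    (f : alg_hom A' A) (g : alg_hom B B') (chi : prohom M' M) :=
  forall j a', tensor_eq (tmap_r (ph_map chi j) (tp_map U' (ph_idx chi j) a'))
                         (tmap_l g (tp_map U j (f a'))).

End NC.
Arguments alg_hom {F}.
Arguments id_hom {F}.
Arguments op_alg {F}.
Arguments op_hom {F A B}.
Arguments prohom {F}.
Arguments rawhom {F}.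
Arguments raw_of {F C D}.
Arguments raw_eq {F C D}.
Arguments raw_id {F}.
Arguments raw_comp {F C D E}.
Arguments ph_eq {F C D}.
Arguments is_proiso {F C D}.
Arguments op_pro {F}.
Arguments op_prohom {F C D}.
Arguments tprohom {F}.
Arguments factors {F A B M C}.
Arguments is_universal_measuring {F A B M}.
Arguments induced_map {F A A' B B' M M'}.
Arguments tensor_eq {F B X}.

From mathcomp Require Import all_boot all_order all_algebra.
From Stdlib Require Import ClassicalEpsilon.
Set Implicit Arguments. Unset Strict Implicit.
Unset Printing Implicit Defensive.
Import GRing.Theory.
Local Open Scope ring_scope.

(* Reversing the order of multiplication in both tensor factors leaves the
   multiplication of [B (x) C] unchanged up to reordering the sum, so a
   measuring [A -> B (x) C] is also a measuring [op A -> op B (x) op C], and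
   conversely.  Applying this to the universal measurings of [(A, B)] and
   [(op A, op B)], universality gives pro-morphisms in both directions; their
   composites factor each universal measuring through itself, hence are
   identities by uniqueness.  Naturality is again a uniqueness statement: both
   sides of the square factor the same measuring. *)

Local Arguments pa_refl {F p}.
Local Arguments pa_trans {F p i j k}.
Local Arguments pa_map {F p i j}.
Local Arguments pa_map_comp {F p i j k}.
Local Arguments ph_idx {F C D}.
Local Arguments ph_map {F C D}.
Local Arguments ph_compat {F C D} p {j j'}.
Local Arguments tp_map {F A B C}.
Local Arguments tp_hom {F A B C}.
Local Arguments tp_compat {F A B C} t {j j'}.
Local Arguments germ_eq {F C X} R {i} f {i'} f'.
Local Arguments AlgHom {F A B}.
Local Arguments ah_prop {F A B}.
Local Arguments is_alg_hom {F A B}.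
Local Arguments is_tens_hom {F A B X}.
Local Arguments tmul {F B X}.
Local Arguments tscale {F B X}.
Local Arguments nc_mul {F n}.
Local Arguments ProHom {F C D}.
Local Arguments TProHom {F A B C}.

Section Tensors.
Variable F : fieldType.

Lemma tensor_eq_sym (B X : lmodType F) (s t : seq (B * X)) :
  tensor_eq s t -> tensor_eq t s.
Proof. by move=> st W beta hbeta; rewrite st. Qed.

Lemma tensor_eq_trans (B X : lmodType F) (s t u : seq (B * X)) :
  tensor_eq s t -> tensor_eq t u -> tensor_eq s u.
Proof. by move=> st tu W beta hbeta; rewrite st // tu. Qed.

Lemma tensor_eq_map_r (B X Y : lmodType F) (g : X -> Y) :
  (forall (k : F) x y, g (k *: x + y) = k *: g x + g y) ->
  forall s t : seq (B * X), tensor_eq s t -> tensor_eq (tmap_r g s) (tmap_r g t).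
Proof.
move=> g_lin s t st W beta [beta_l beta_r]; rewrite !big_map.
by apply: (st W (fun b x => beta b (g x))); split=> k b b' x //; rewrite g_lin beta_r.
Qed.

Lemma tensor_eq_map_l (B B' X : lmodType F) (g : B -> B') :
  (forall (k : F) x y, g (k *: x + y) = k *: g x + g y) ->
  forall s t : seq (B * X), tensor_eq s t -> tensor_eq (tmap_l g s) (tmap_l g t).
Proof.
move=> g_lin s t st W beta [beta_l beta_r]; rewrite !big_map.
by apply: (st W (fun b x => beta (g b) x)); split=> k b b' x //; rewrite g_lin beta_l.
Qed.

Lemma eq_tmap_r (B X Y : Type) (f g : X -> Y) :
  f =1 g -> @tmap_r B X Y f =1 tmap_r g.
Proof. by move=> fg s; apply: eq_map => q; rewrite /= fg. Qed.

Lemma tmap_r_comp (B X Y Z : Type) (f : X -> Y) (g : Y -> Z) (s : seq (B * X)) :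
  tmap_r g (tmap_r f s) = tmap_r (g \o f) s.
Proof. by rewrite /tmap_r -map_comp. Qed.

Lemma tmap_r_id (B X : Type) (s : seq (B * X)) : tmap_r id s = s.
Proof. by rewrite /tmap_r -[RHS]map_id; apply: eq_map => -[]. Qed.

Lemma tmap_l_tmap_r (B B' X Y : Type) (g : B -> B') (f : X -> Y) (s : seq (B * X)) :
  tmap_l g (tmap_r f s) = tmap_r f (tmap_l g s).
Proof. by rewrite /tmap_l /tmap_r -!map_comp. Qed.

Lemma tmap_r_tscale (B X Y : lmodType F) (g : X -> Y) k (s : seq (B * X)) :
  tmap_r g (tscale k s) = tscale k (tmap_r g s).
Proof. by rewrite /tmap_r /tscale -!map_comp. Qed.

Lemma tmap_r_tmul (B X Y : ncalg F) (g : X -> Y) :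
  (forall x y, g (nc_mul x y) = nc_mul (g x) (g y)) ->
  forall s t : seq (B * X), tmap_r g (tmul s t) = tmul (tmap_r g s) (tmap_r g t).
Proof.
move=> g_mul s t; rewrite /tmul /tmap_r.
elim: s => //= p s IHs; rewrite map_cat IHs -!map_comp.
by congr (_ ++ _); apply: eq_map => q /=; rewrite g_mul.
Qed.

Lemma tmul_op (B X : ncalg F) (s t : seq (B * X)) :
  tensor_eq (tmul t s) (@tmul _ (op_alg B) (op_alg X) s t).
Proof. by move=> W beta _; rewrite !big_allpairs_dep; apply: exchange_big. Qed.

Lemma is_tens_hom_tmap_r (A B X Y : ncalg F) (phi : A -> seq (B * X)) (g : X -> Y) :
  is_tens_hom phi -> is_alg_hom g -> is_tens_hom (fun a => tmap_r g (phi a)).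
Proof.
move=> [phi_lin phi_mul] [g_lin g_mul]; split=> [k a a' | a a'].
  by rewrite -tmap_r_tscale /tmap_r -map_cat; apply: tensor_eq_map_r.
by rewrite -tmap_r_tmul //; apply: tensor_eq_map_r.
Qed.

Lemma is_tens_hom_op (A B X : ncalg F) (phi : A -> seq (B * X)) :
  is_tens_hom phi ->
  @is_tens_hom _ (op_alg A) (op_alg B) (op_alg X) phi.
Proof.
move=> [phi_lin phi_mul]; split=> // a a'.
exact: tensor_eq_trans (phi_mul a' a) (tmul_op _ _).
Qed.

End Tensors.

Section ProMorphisms.
Variable F : fieldType.

Lemma ah_lin (X Y : ncalg F) (f : alg_hom X Y) :
  forall (k : F) x y, f (k *: x + y) = k *: f x + f y.
Proof. exact: (ah_prop f).1. Qed.

Lemma pa_map_irr (C : proalg F) i k (h h' : pa_le _ C i k) x :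
  pa_map h x = pa_map h' x.
Proof. by rewrite -(pa_map_comp h (pa_refl k) h') pa_map_id. Qed.

Lemma comp_is_alg_hom (X Y Z : ncalg F) (g : alg_hom Y Z) (f : alg_hom X Y) :
  is_alg_hom (g \o f).
Proof.
case: g f => g [g_lin g_mul] [f [f_lin f_mul]].
by split=> [k x y | x y] /=; rewrite ?f_lin ?g_lin ?f_mul ?g_mul.
Qed.

Definition comp_hom (X Y Z : ncalg F) (g : alg_hom Y Z) (f : alg_hom X Y) :
  alg_hom X Z := AlgHom _ (comp_is_alg_hom g f).

Lemma comp_compat (C D E : proalg F) (g : prohom D E) (f : prohom C D) k k'
    (h : pa_le _ E k k') :
  germ_eq (@eq _)
    (fun x => pa_map h (comp_hom (ph_map g k') (ph_map f (ph_idx g k')) x))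
    (fun x => comp_hom (ph_map g k) (ph_map f (ph_idx g k)) x).
Proof.
have [l [hl [hl' g_compat]]] := ph_compat g h.
have [m1 [h1 [h1' f_compat1]]] := ph_compat f hl.
have [m2 [h2 [h2' f_compat2]]] := ph_compat f hl'.
have [m [e1 e2]] := @pa_directed _ _ m1 m2.
exists m, (pa_trans h1' e1), (pa_trans h2' e2) => x /=.
set h1m := pa_trans h1 e1; set h2m := pa_trans h2 e2.
rewrite -(pa_map_comp h1' e1) -(pa_map_comp h2' e2) -f_compat1 -f_compat2.
rewrite g_compat (pa_map_comp h1 e1 h1m) (pa_map_comp h2 e2 h2m).
by rewrite (pa_map_irr h1m h2m).
Qed.

Definition comp_pro (C D E : proalg F) (g : prohom D E) (f : prohom C D) :
  prohom C E :=
  ProHom (fun k => ph_idx f (ph_idx g k))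
    (fun k => comp_hom (ph_map g k) (ph_map f (ph_idx g k))) (comp_compat g f).

Lemma id_compat (C : proalg F) j j' (h : pa_le _ C j j') :
  germ_eq (@eq _) (fun x => pa_map h (id_hom (pa_obj _ C j') x))
    (fun x => id_hom (pa_obj _ C j) x).
Proof. by exists j', (pa_refl j'), h => x /=; rewrite pa_map_id. Qed.

Definition id_pro (C : proalg F) : prohom C C :=
  ProHom (fun j => j) (fun j => id_hom (pa_obj _ C j)) (@id_compat C).

Lemma unop_is_alg_hom (X Y : ncalg F) (f : alg_hom X (op_alg Y)) :
  @is_alg_hom _ (op_alg X) Y f.
Proof. by case: f => f [f_lin f_mul]; split=> //= x y; apply: f_mul. Qed.

Definition unop_hom (X Y : ncalg F) (f : alg_hom X (op_alg Y)) :
  alg_hom (op_alg X) Y := AlgHom _ (unop_is_alg_hom f).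

Definition unop_pro (C D : proalg F) (p : prohom C (op_pro D)) :
  prohom (op_pro C) D :=
  @ProHom _ (op_pro C) D (ph_idx p) (fun j => unop_hom (ph_map p j))
    (@ph_compat _ _ _ p).

End ProMorphisms.

Section Measurings.
Variable F : fieldType.
Implicit Types A B : ncalg F.

Section Pushforward.
Variables (A B : ncalg F) (M C : proalg F) (U : tprohom A B M) (p : prohom M C).

Definition push_map j a := tmap_r (ph_map p j) (tp_map U (ph_idx p j) a).

Lemma push_compat j j' (h : pa_le _ C j j') a :
  tensor_eq (tmap_r (pa_map h) (push_map j' a)) (push_map j a).
Proof.
rewrite /push_map; have [m [hi [hi' p_compat]]] := ph_compat p h.
have lift_hi : tensor_eq (tp_map U (ph_idx p j') a) (tmap_r (pa_map hi) (tp_map U m a)).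
  exact/tensor_eq_sym/tp_compat.
apply: tensor_eq_trans
  (tensor_eq_map_r (ah_lin _) (tensor_eq_map_r (ah_lin _) lift_hi)) _.
rewrite !tmap_r_comp (eq_tmap_r p_compat) -tmap_r_comp.
exact: (tensor_eq_map_r (ah_lin (ph_map p j)) (tp_compat U hi' a)).
Qed.

Definition push : tprohom A B C :=
  TProHom push_map (fun j => is_tens_hom_tmap_r (tp_hom U _) (ah_prop _)) push_compat.

Lemma push_factors : factors U p push.
Proof. by []. Qed.

End Pushforward.

Lemma push_map_comp A B (M C D : proalg F) (U : tprohom A B M) (p : prohom M C)
    (q : prohom C D) j a :
  push_map U (comp_pro q p) j a = tmap_r (ph_map q j) (push_map U p (ph_idx q j) a).
Proof. by rewrite /push_map tmap_r_comp. Qed.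

Lemma factors_comp A B (M N C : proalg F) (U : tprohom A B M) (V : tprohom A B N)
    (W : tprohom A B C) (p : prohom M N) (q : prohom N C) :
  factors U p V -> factors V q W -> factors U (comp_pro q p) W.
Proof.
move=> Up Vq j a; rewrite -[tmap_r _ _]/(push_map U (comp_pro q p) j a) push_map_comp.
exact: tensor_eq_trans (tensor_eq_map_r (ah_lin (ph_map q j)) (Up _ a)) (Vq j a).
Qed.

Section Universality.
Variables (A B : ncalg F) (M : proalg F) (U : tprohom A B M).
Hypothesis U_universal : is_universal_measuring U.

Lemma universal_endo_id (p : prohom M M) : factors U p U -> ph_eq p (id_pro M).
Proof. by move=> Up; apply: (U_universal U).2 => // j a; rewrite tmap_r_id. Qed.

Lemma universal_eq (C : proalg F) (p q : prohom M C) :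
  (forall j a, tensor_eq (push_map U p j a) (push_map U q j a)) -> ph_eq p q.
Proof. by move=> pq; apply: (U_universal (push U q)).2 pq (push_factors U q). Qed.

End Universality.

Definition op_tprohom A B (C : proalg F) (T : tprohom A B C) :
    tprohom (op_alg A) (op_alg B) (op_pro C) :=
  @TProHom _ (op_alg A) (op_alg B) (op_pro C) (tp_map T)
    (fun j => is_tens_hom_op (tp_hom T j)) (@tp_compat _ _ _ _ T).

(* [op_alg (op_alg A)] and [A] have convertible carriers and products, so
   [is_tens_hom_op] also goes back from the opposites. *)
Definition unop_tprohom A B (C : proalg F) (T : tprohom (op_alg A) (op_alg B) C) :
    tprohom A B (op_pro C) :=
  @TProHom _ A B (op_pro C) (tp_map T)
    (fun j => is_tens_hom_op (tp_hom T j)) (@tp_compat _ _ _ _ T).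

Lemma factors_unop A B (M N : proalg F) (U : tprohom A B M)
    (V : tprohom (op_alg A) (op_alg B) N) (p : prohom N (op_pro M)) :
  factors V p (op_tprohom U) -> factors (unop_tprohom V) (unop_pro p) U.
Proof. by []. Qed.

Lemma factors_op A B (M N : proalg F) (U : tprohom A B M)
    (V : tprohom (op_alg A) (op_alg B) N) (p : prohom M (op_pro N)) :
  factors U p (unop_tprohom V) -> factors (op_tprohom U) (unop_pro p) V.
Proof. by []. Qed.

Section OppositeIso.
Variables (A B : ncalg F) (M N : proalg F).
Variables (U : tprohom A B M) (V : tprohom (op_alg A) (op_alg B) N).
Hypotheses (U_universal : is_universal_measuring U)
           (V_universal : is_universal_measuring V).
Variables (p : prohom M (op_pro N)) (q : prohom N (op_pro M)).
Hypotheses (Up : factors U p (unop_tprohom V)) (Vq : factors V q (op_tprohom U)).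

Lemma unop_pro_is_proiso : is_proiso (unop_pro p).
Proof.
exists q; split.
  exact: universal_endo_id U_universal _ (factors_comp Up (factors_unop Vq)).
exact: universal_endo_id V_universal _ (factors_comp Vq (factors_op Up)).
Qed.

End OppositeIso.

Section Naturality.
Variables (A A' B B' : ncalg F) (f : alg_hom A' A) (g : alg_hom B B').
Variables (M M' N N' : proalg F).
Variables (U : tprohom A B M) (U' : tprohom A' B' M').
Variables (V : tprohom (op_alg A) (op_alg B) N)
          (V' : tprohom (op_alg A') (op_alg B') N').
Hypothesis U'_universal : is_universal_measuring U'.
Variables (p : prohom M (op_pro N)) (p' : prohom M' (op_pro N')).
Hypotheses (Up : factors U p (unop_tprohom V)) (Up' : factors U' p' (unop_tprohom V')).
Variables (chi : prohom M' M) (chi' : prohom N' N).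
Hypotheses (chi_induced : induced_map U U' f g chi)
           (chi'_induced : induced_map V V' (op_hom f) (op_hom g) chi').

Lemma unop_pro_natural :
  raw_eq (raw_comp chi' (unop_pro p')) (raw_comp (unop_pro p) (op_prohom chi)).
Proof.
suff: ph_eq (comp_pro (op_prohom chi') p') (comp_pro p chi) by [].
apply: (universal_eq U'_universal) => j a.
(* Both sides push [U'] to the measuring [a |-> (g (x) id) (V (f a))]. *)
apply: (@tensor_eq_trans _ _ _ _ (tmap_l g (tp_map V j (f a)))).
  rewrite push_map_comp.
  apply: (@tensor_eq_trans _ _ _ _ (push_map V' chi' j a)); last exact: chi'_induced.
  by apply: tensor_eq_map_r; [exact (ah_lin (ph_map chi' j)) | exact: Up'].
rewrite push_map_comp; apply: tensor_eq_sym.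
apply: (@tensor_eq_trans _ _ _ _ (tmap_r (ph_map p j) (tmap_l g (tp_map U _ (f a))))).
  by apply: tensor_eq_map_r; [exact (ah_lin (ph_map p j)) | exact: chi_induced].
rewrite -tmap_l_tmap_r.
by apply: tensor_eq_map_l; [exact (ah_lin g) | exact: Up].
Qed.

End Naturality.

End Measurings.

Theorem mainTheorem5 (F : fieldType)
  (Mnc : ncalg F -> ncalg F -> proalg F)
  (Ups : forall A B : ncalg F, tprohom A B (Mnc A B))
  (Huniv : forall A B : ncalg F, is_universal_measuring (Ups A B)) :
  exists theta : forall A B : ncalg F,
      prohom (op_pro (Mnc A B)) (Mnc (op_alg A) (op_alg B)),
    (forall A B : ncalg F, is_proiso (theta A B)) /\
    (forall (A A' B B' : ncalg F) (f : alg_hom A' A) (g : alg_hom B B')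
            (chi : prohom (Mnc A' B') (Mnc A B))
            (chi' : prohom (Mnc (op_alg A') (op_alg B')) (Mnc (op_alg A) (op_alg B))),
       induced_map (Ups A B) (Ups A' B') f g chi ->
       induced_map (Ups (op_alg A) (op_alg B)) (Ups (op_alg A') (op_alg B'))
                   (op_hom f) (op_hom g) chi' ->
       raw_eq (raw_comp chi' (theta A' B')) (raw_comp (theta A B) (op_prohom chi))).
Proof.
have to_op A B : {p : prohom (Mnc A B) (op_pro (Mnc (op_alg A) (op_alg B))) |
    factors (Ups A B) p (unop_tprohom (Ups (op_alg A) (op_alg B)))}.
  exact/constructive_indefinite_description/(Huniv _ _ _ _).1.
have from_op A B : exists q : prohom (Mnc (op_alg A) (op_alg B)) (op_pro (Mnc A B)),
    factors (Ups (op_alg A) (op_alg B)) q (op_tprohom (Ups A B)).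
  exact: (Huniv _ _ _ _).1.
exists (fun A B => unop_pro (sval (to_op A B))); split.
  move=> A B; have [q Vq] := from_op A B.
  exact (unop_pro_is_proiso (Huniv _ _) (Huniv _ _) (svalP (to_op A B)) Vq).
move=> A A' B B' f g chi chi' chi_induced chi'_induced.
exact (unop_pro_natural (Huniv _ _) (svalP (to_op A B)) (svalP (to_op A' B'))
  chi_induced chi'_induced).
Qed.
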